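(* Consider the infinite-horizon adaptive learning forward guidance model below, for any integer $T\ge1$ and any $\bar i<0$. (i) If interest-rate expectations are credible, then $\partial x_0/\partial i_T=-\sigma\beta^T$ and $\partial\pi_0/\partial i_T=-\lambda\sigma\beta^T$; in particular there is no forward guidance puzzle. (ii) If interest-rate expectations are not credible, then $\partial x_0/\partial i_T=\partial\pi_0/\partial i_T=0$ for every $T$; in particular there is no forward guidance puzzle.
   Context: Parameters: $0<\beta<1$, $\xi\in(0,1)$, $\lambda:=(1-\xi\beta)(1-\xi)/\xi$, $\sigma>0$, $\psi>1$, gains $\gamma_{x,t},\gamma_{\pi,t},\gamma_{i,t}$. Model: $x_t=-\sigma i_t+\hat E_t\sum_{k\ge t}\beta^{k-t}\big((1-\beta)x_{k+1}+\sigma\pi_{k+1}-\sigma\beta i_{k+1}\big)$, $\pi_t=\lambda x_t+\hat E_t\sum_{k\ge t}(\xi\beta)^{k-t}\big(\xi\beta\lambda x_{k+1}+(1-\xi)\beta\pi_{k+1}\big)$, with $\hat E_t x_{k+1}=\hat E_t x_{t+1}=\gamma_{x,t}x_{t-1}+(1-\gamma_{x,t})\hat E_{t-1}x_t$ and $\hat E_t\pi_{k+1}=\hat E_t\pi_{t+1}=\gamma_{\pi,t}\pi_{t-1}+(1-\gamma_{\pi,t})\hat E_{t-1}\pi_t$ for all $k\ge t$; initial values $x_{-1},\pi_{-1},i_{-1},\hat E_{-1}x_0,\hat E_{-1}\pi_0,\hat E_{-1}i_0$ are given and do not depend on $\bar i$. Policy: $i_t=0$ for $t=0,\dots,T-1$,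 $i_T=\bar i<0$, $i_t=\psi\pi_t$ for $t>T$. Credible interest-rate expectations at $t=0$: $\hat E_0 i_{k+1}=0$ for $k=0,\dots,T-2$, $\hat E_0 i_{T}=\bar i$, and $\hat E_0 i_{k+1}=\gamma_{i,0}i_{-1}+(1-\gamma_{i,0})\hat E_{-1}i_0$ for $k\ge T$. Non-credible: $\hat E_0 i_{k+1}=\gamma_{i,0}i_{-1}+(1-\gamma_{i,0})\hat E_{-1}i_0$ for all $k\ge0$. $\partial/\partial i_T$ denotes the derivative with respect to $\bar i$. The forward guidance puzzle means $\lim_{T\to\infty}\partial\pi_0/\partial i_T=\lim_{T\to\infty}\partial x_0/\partial i_T=-\infty$. *)

From Stdlib Require Import Reals.
From Coquelicot Require Import Coquelicot.
Open Scope R_scope.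

Definition lam (beta xi : R) : R := (1 - xi * beta) * (1 - xi) / xi.

(* Adaptive-learning update: Ehat_t z_{t+1} = g * z_{t-1} + (1-g) * Ehat_{t-1} z_t *)
Definition adapt (g zprev Eprev : R) : R := g * zprev + (1 - g) * Eprev.

Definition policy_i (T : nat) (ibar psi : R) (pi : nat -> R) (t : nat) : R :=
  if (t <? T)%nat then 0 else if (t =? T)%nat then ibar else psi * pi t.

(* Credible time-0 expectations Ehat_0 i_{k+1}:
   0 for k+1 < T, ibar for k+1 = T, adaptive value Eadapt for k+1 > T. *)
Definition Ei_cred (T : nat) (ibar Eadapt : R) (k : nat) : R :=
  if (S k <? T)%nat then 0 else if (S k =? T)%nat then ibar else Eadapt.

Definition Ei_noncred (Eadapt : R) (k : nat) : R := Eadapt.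

(* Time-0 IS equation, with Ehat_0 x_{k+1} = Ex, Ehat_0 pi_{k+1} = Epi,
   Ehat_0 i_{k+1} = Ei k (all k >= 0):
   x_0 = -sigma i_0 + sum_{k>=0} beta^k ((1-beta) Ex + sigma Epi - sigma beta Ei k). *)
Definition IS_eq0 (beta sigma : R) (x0 i0 Ex Epi : R) (Ei : nat -> R) : Prop :=
  x0 = - sigma * i0
       + Series (fun k => beta ^ k * ((1 - beta) * Ex + sigma * Epi - sigma * beta * Ei k)).

Definition PC_eq0 (beta xi : R) (x0 pi0 Ex Epi : R) : Prop :=
  pi0 = lam beta xi * x0
        + Series (fun k => (xi * beta) ^ k
                   * (xi * beta * lam beta xi * Ex + (1 - xi) * beta * Epi)).

(* Forward guidance puzzle for the sequences (in T) of derivatives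
   dpi_0/di_T and dx_0/di_T: both tend to -infinity. *)
Definition FG_puzzle (dpi dx : nat -> R) : Prop :=
  is_lim_seq dpi m_infty /\ is_lim_seq dx m_infty.

(** At time 0 the policy rate is [i_0 = 0] and the expectations of output and
    inflation are adaptive, hence predetermined, so the announced rate [i_T]
    can reach [x_0] and [pi_0] only through the expected rate path in the IS
    curve.  Under credible expectations it enters that path exactly once, as
    [Ehat_0 i_T], in the [k = T - 1] term of the IS sum with weight
    [beta^(T-1) * sigma * beta]; hence [x_0] is affine in [i_T] with slope
    [-sigma beta^T], and the Phillips curve makes [pi_0] affine with slope
    [lambda] times that.  Under non-credible expectations [i_T] does not enter
    at all.  Either way [dx_0/di_T] stays bounded below as [T] grows, so it
    cannot diverge to [-oo]. *)

From Stdlib Require Import Reals Lia Lra.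
From Coquelicot Require Import Coquelicot.
Open Scope R_scope.

Lemma is_series_zero : is_series (fun _ : nat => 0) 0.
Proof.
  change (is_lim_seq (sum_n (fun _ : nat => 0)) 0).
  apply (is_lim_seq_ext (fun _ => 0)); [|apply is_lim_seq_const].
  intros n. rewrite sum_n_const. ring.
Qed.

Lemma is_series_delta (m : nat) (c : R) :
  is_series (fun k => if (k =? m)%nat then c else 0) c.
Proof.
  induction m as [|m IH]; apply is_series_decr_1; simpl.
  - change (is_series (fun _ : nat => 0) (c - c)). rewrite Rminus_diag. exact is_series_zero.
  - change (is_series (fun k => if (k =? m)%nat then c else 0) (c - 0)).
    rewrite Rminus_0_r. exact IH.
Qed.

Lemma ex_series_geom_mult_bounded (q M : R) (u : nat -> R) :
  0 <= q < 1 -> (forall k, Rabs (u k) <= M) -> ex_series (fun k => q ^ k * u k).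
Proof.
  intros hq hu.
  apply (@ex_series_le R_AbsRing R_CompleteNormedModule) with (fun k => q ^ k * M).
  - intros k. change (Rabs (q ^ k * u k) <= q ^ k * M).
    rewrite Rabs_mult, (Rabs_pos_eq (q ^ k)) by (apply pow_le; lra).
    apply Rmult_le_compat_l; [apply pow_le; lra | apply hu].
  - apply ex_series_scal_r, ex_series_geom. rewrite Rabs_pos_eq; lra.
Qed.

Lemma is_lim_seq_m_infty_bounded_below (u : nat -> R) (M : R) :
  eventually (fun n => M <= u n) -> ~ is_lim_seq u m_infty.
Proof.
  intros hM hu. exact (is_lim_seq_le_loc (fun _ => M) u M m_infty hM (is_lim_seq_const M) hu).
Qed.

Lemma is_derive_affine_on_neg (f : R -> R) (a c ib : R) :
  ib < 0 -> (forall t, t < 0 -> f t = a + c * t) -> is_derive f ib c.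
Proof.
  intros hib hf.
  apply is_derive_ext_loc with (fun t => a + c * t).
  - apply (filter_imp (fun t => t < 0)); [intros t ht; symmetry; now apply hf|].
    exact (open_lt 0 ib hib).
  - auto_derive; [exact I | ring].
Qed.

Definition IS_sum (beta sigma Ex Epi : R) (Ei : nat -> R) : R :=
  Series (fun k => beta ^ k * ((1 - beta) * Ex + sigma * Epi - sigma * beta * Ei k)).

Definition PC_sum (beta xi Ex Epi : R) : R :=
  Series (fun k => (xi * beta) ^ k
                   * (xi * beta * lam beta xi * Ex + (1 - xi) * beta * Epi)).

Lemma policy_i_0 (T : nat) (ib psi : R) (pi : nat -> R) :
  (1 <= T)%nat -> policy_i T ib psi pi 0 = 0.
Proof.
  intros hT. unfold policy_i.
  now replace (0 <? T)%nat with true by (symmetry; apply Nat.ltb_lt; lia).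
Qed.

Lemma IS_eq0_before_horizon (beta sigma x0 Ex Epi psi ib : R) (Ei pi : nat -> R) (T : nat) :
  (1 <= T)%nat -> IS_eq0 beta sigma x0 (policy_i T ib psi pi 0) Ex Epi Ei ->
  x0 = IS_sum beta sigma Ex Epi Ei.
Proof. intros hT his. rewrite his, policy_i_0 by exact hT. unfold IS_sum. ring. Qed.

Lemma Ei_cred_0_cases (T : nat) (E : R) (k : nat) :
  Ei_cred T 0 E k = 0 \/ Ei_cred T 0 E k = E.
Proof. unfold Ei_cred. destruct (S k <? T)%nat, (S k =? T)%nat; auto. Qed.

Lemma Ei_cred_split (T : nat) (ib E : R) (k : nat) : (1 <= T)%nat ->
  Ei_cred T ib E k = Ei_cred T 0 E k + if (k =? pred T)%nat then ib else 0.
Proof.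
  intros hT. unfold Ei_cred.
  destruct (Nat.ltb_spec (S k) T), (Nat.eqb_spec (S k) T), (Nat.eqb_spec k (pred T));
    (lia || ring).
Qed.

Section InterestRateSums.

Variables beta sigma Ex Epi E : R.
Hypothesis hbeta : 0 <= beta < 1.

Lemma ex_series_IS_cred (T : nat) :
  ex_series (fun k => beta ^ k * ((1 - beta) * Ex + sigma * Epi - sigma * beta * Ei_cred T 0 E k)).
Proof.
  set (A := (1 - beta) * Ex + sigma * Epi).
  apply ex_series_geom_mult_bounded with (Rmax (Rabs A) (Rabs (A - sigma * beta * E))); [exact hbeta|].
  intros k. destruct (Ei_cred_0_cases T E k) as [-> | ->].
  - rewrite Rmult_0_r, Rminus_0_r. apply Rmax_l.
  - apply Rmax_r.
Qed.

Lemma IS_sum_cred (T : nat) (ib : R) : (1 <= T)%nat ->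
  IS_sum beta sigma Ex Epi (Ei_cred T ib E)
  = IS_sum beta sigma Ex Epi (Ei_cred T 0 E) + (- sigma * beta ^ T) * ib.
Proof.
  intros hT. unfold IS_sum.
  rewrite (Series_ext _ (fun k =>
      beta ^ k * ((1 - beta) * Ex + sigma * Epi - sigma * beta * Ei_cred T 0 E k)
      + if (k =? pred T)%nat then (- sigma * beta ^ T) * ib else 0)).
  - rewrite Series_plus; [|apply ex_series_IS_cred|eexists; apply is_series_delta].
    now rewrite (is_series_unique _ _ (is_series_delta _ _)).
  - intros k. rewrite Ei_cred_split by exact hT.
    destruct (Nat.eqb_spec k (pred T)) as [-> | _]; [|ring].
    assert (hpow : beta ^ T = beta ^ pred T * beta).
    { rewrite <- (Nat.succ_pred_pos T) at 1 by lia. simpl. ring. }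
    rewrite hpow. ring.
Qed.

End InterestRateSums.

Lemma is_derive_time0_affine (beta xi Ex Epi a c ib : R) (x pi : R -> R) :
  ib < 0 ->
  (forall b, b < 0 -> x b = a + c * b /\ PC_eq0 beta xi (x b) (pi b) Ex Epi) ->
  is_derive x ib c /\ is_derive pi ib (lam beta xi * c).
Proof.
  intros hib hmodel. split.
  - apply (is_derive_affine_on_neg x a c ib hib). intros b hb. apply hmodel, hb.
  - apply (is_derive_affine_on_neg pi (lam beta xi * a + PC_sum beta xi Ex Epi) _ ib hib).
    intros b hb. destruct (hmodel b hb) as [hx hpc]. rewrite hpc, hx. unfold PC_sum. ring.
Qed.

Lemma no_FG_puzzle_of_is_derive (dpi : nat -> R) (x : nat -> R -> R) (d : nat -> R) (ib M : R) :
  (forall T, (1 <= T)%nat -> is_derive (x T) ib (d T)) ->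
  (forall T, (1 <= T)%nat -> M <= d T) ->
  ~ FG_puzzle dpi (fun T => Derive (x T) ib).
Proof.
  intros hd hM [_ hlim]. revert hlim. apply (is_lim_seq_m_infty_bounded_below _ M).
  exists 1%nat. intros T hT. now rewrite (is_derive_unique _ _ _ (hd T hT)), <- (hM T hT).
Qed.

Theorem proposition11
  (beta xi sigma psi : R) (gx gpi gi : nat -> R)
  (xm1 pim1 im1 Ex0 Epi0 Ei0 : R)
  (hbeta : 0 < beta < 1) (hxi : 0 < xi < 1) (hsigma : 0 < sigma) (hpsi : 1 < psi) :
  let Ex := adapt (gx 0%nat) xm1 Ex0 in
  let Epi := adapt (gpi 0%nat) pim1 Epi0 in
  let Eiad := adapt (gi 0%nat) im1 Ei0 in
  (* (i) credible interest-rate expectations *)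
  (forall x pi : nat -> R -> nat -> R,
     (forall (T : nat) (ib : R), (1 <= T)%nat -> ib < 0 ->
        IS_eq0 beta sigma (x T ib 0%nat) (policy_i T ib psi (pi T ib) 0%nat)
               Ex Epi (Ei_cred T ib Eiad)
        /\ PC_eq0 beta xi (x T ib 0%nat) (pi T ib 0%nat) Ex Epi) ->
     (forall (T : nat) (ib : R), (1 <= T)%nat -> ib < 0 ->
        is_derive (fun b => x T b 0%nat) ib (- sigma * beta ^ T)
        /\ is_derive (fun b => pi T b 0%nat) ib (- lam beta xi * sigma * beta ^ T))
     /\ (forall ib : R, ib < 0 ->
        ~ FG_puzzle (fun T => Derive (fun b => pi T b 0%nat) ib)
                    (fun T => Derive (fun b => x T b 0%nat) ib)))
  /\
  (* (ii) non-credible interest-rate expectations *)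
  (forall x pi : nat -> R -> nat -> R,
     (forall (T : nat) (ib : R), (1 <= T)%nat -> ib < 0 ->
        IS_eq0 beta sigma (x T ib 0%nat) (policy_i T ib psi (pi T ib) 0%nat)
               Ex Epi (Ei_noncred Eiad)
        /\ PC_eq0 beta xi (x T ib 0%nat) (pi T ib 0%nat) Ex Epi) ->
     (forall (T : nat) (ib : R), (1 <= T)%nat -> ib < 0 ->
        is_derive (fun b => x T b 0%nat) ib 0
        /\ is_derive (fun b => pi T b 0%nat) ib 0)
     /\ (forall ib : R, ib < 0 ->
        ~ FG_puzzle (fun T => Derive (fun b => pi T b 0%nat) ib)
                    (fun T => Derive (fun b => x T b 0%nat) ib))).
Proof.
  intros Ex Epi Eiad. split; intros x pi hmodel.
  - assert (hderiv : forall T ib, (1 <= T)%nat -> ib < 0 ->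
        is_derive (fun b => x T b 0%nat) ib (- sigma * beta ^ T)
        /\ is_derive (fun b => pi T b 0%nat) ib (- lam beta xi * sigma * beta ^ T)).
    { intros T ib hT hib.
      replace (- lam beta xi * sigma * beta ^ T) with (lam beta xi * (- sigma * beta ^ T)) by ring.
      apply (is_derive_time0_affine beta xi Ex Epi (IS_sum beta sigma Ex Epi (Ei_cred T 0 Eiad)));
        [exact hib|].
      intros b hb. destruct (hmodel T b hT hb) as [his hpc]. split; [|exact hpc].
      rewrite (IS_eq0_before_horizon _ _ _ _ _ _ _ _ _ _ hT his).
      apply IS_sum_cred; [lra | exact hT]. }
    split; [exact hderiv|]. intros ib hib.
    apply (no_FG_puzzle_of_is_derive _ _ (fun T => - sigma * beta ^ T) ib (- sigma)).
    + intros T hT. apply (hderiv T ib hT hib).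
    + intros T hT. pose proof (pow_lt_1_compat beta T ltac:(lra) ltac:(lia)). nra.
  - assert (hderiv : forall T ib, (1 <= T)%nat -> ib < 0 ->
        is_derive (fun b => x T b 0%nat) ib 0 /\ is_derive (fun b => pi T b 0%nat) ib 0).
    { intros T ib hT hib. rewrite <- (Rmult_0_r (lam beta xi)) at 2.
      apply (is_derive_time0_affine beta xi Ex Epi (IS_sum beta sigma Ex Epi (Ei_noncred Eiad)));
        [exact hib|].
      intros b hb. destruct (hmodel T b hT hb) as [his hpc]. split; [|exact hpc].
      rewrite (IS_eq0_before_horizon _ _ _ _ _ _ _ _ _ _ hT his). ring. }
    split; [exact hderiv|]. intros ib hib.
    apply (no_FG_puzzle_of_is_derive _ _ (fun _ => 0) ib 0); [|intros; apply Rle_refl].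
    intros T hT. apply (hderiv T ib hT hib).
Qed.
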